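(* Let $g:\mathbb{R}^n\to\mathbb{R}$ be a convex, continuously differentiable function and let $f_d:\mathbb{R}^n\to\mathbb{R}^n$ be continuously differentiable such that $x\mapsto g(f_d(x))$ is concave. Then the optimization problem $$\max_{\alpha\ge 0}\ \min_{x\in\mathbb{R}^n}\ \{\alpha g(x)-g(f_d(x))\}$$ is equivalent to the nonlinear optimization problem $$\max_{x\in\mathbb{R}^n,\ \alpha\in\mathbb{R}}\ \{\alpha g(x)-g(f_d(x)) : \alpha\nabla_x g(x)-\nabla_x\big(g(f_d(x))\big)=0,\ \alpha\ge 0\}.$$ *)

From HB Require Import structures.
From mathcomp Require Import all_boot all_order all_algebra.
From mathcomp Require Import all_classical all_reals.
From mathcomp Require Import topology normedtype derive convex.
Set Implicit Arguments. Unset Strict Implicit. Unset Printing Implicit Defensive.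
Import Order.TTheory GRing.Theory Num.Theory.
Import numFieldNormedType.Exports.
Local Open Scope classical_set_scope.
Local Open Scope ring_scope.

Definition grad (R : realType) (n : nat) (f : 'rV[R]_n -> R) (x : 'rV[R]_n)
  : 'rV[R]_n := \row_(i < n) 'D_(delta_mx 0 i) f x.

Definition C1 (R : realType) (n : nat) (W : normedModType R)
  (f : 'rV[R]_n -> W) : Prop :=
  (forall x, differentiable f x) /\
  (forall i : 'I_n, continuous (fun x => 'D_(delta_mx 0 i) f x)).

Definition concave_function (R : realType) (n : nat) (f : 'rV[R]_n -> R) :=
  convex_function setT (fun x : 'rV[R]_n => - f x).

Definition objective (R : realType) (n : nat) (g : 'rV[R]_n -> R)
  (fd : 'rV[R]_n -> 'rV[R]_n) (a : R) (x : 'rV[R]_n) : R :=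
  a * g x - g (fd x).

Definition is_minimizer (R : realType) (n : nat) (g : 'rV[R]_n -> R)
  (fd : 'rV[R]_n -> 'rV[R]_n) (a : R) (x : 'rV[R]_n) : Prop :=
  forall y, objective g fd a x <= objective g fd a y.

(* feasibility for the nonlinear program *)
Definition stationary (R : realType) (n : nat) (g : 'rV[R]_n -> R)
  (fd : 'rV[R]_n -> 'rV[R]_n) (a : R) (x : 'rV[R]_n) : Prop :=
  a *: grad g x - grad (fun y => g (fd y)) x = 0 /\ 0 <= a.

Definition solves_maxmin (R : realType) (n : nat) (g : 'rV[R]_n -> R)
  (fd : 'rV[R]_n -> 'rV[R]_n) (a : R) (x : 'rV[R]_n) : Prop :=
  0 <= a /\ is_minimizer g fd a x /\
  forall a' x', 0 <= a' -> is_minimizer g fd a' x' ->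
    objective g fd a' x' <= objective g fd a x.

Definition solves_nlp (R : realType) (n : nat) (g : 'rV[R]_n -> R)
  (fd : 'rV[R]_n -> 'rV[R]_n) (a : R) (x : 'rV[R]_n) : Prop :=
  stationary g fd a x /\
  forall a' x', stationary g fd a' x' ->
    objective g fd a' x' <= objective g fd a x.

From HB Require Import structures.
From mathcomp Require Import all_boot all_order all_algebra.
From mathcomp Require Import all_classical all_reals.
From mathcomp Require Import topology normedtype derive convex.
From mathcomp Require Import lra.
Import Order.TTheory GRing.Theory Num.Theory.
Import numFieldNormedType.Exports.
Local Open Scope ring_scope.
Local Open Scope classical_set_scope.

(** For [a >= 0] the inner objective [a g - g \o fd] is convex, being a
  nonnegative multiple of the convex [g] plus the convex [- g \o fd], and it is
  differentiable. A differentiable convex function attains its global minimum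
  exactly at its critical points: at a minimum every directional derivative is
  nonnegative, hence the gradient vanishes; conversely the derivative in the
  direction [y - x] bounds the chord [f y - f x] from below. So for [a >= 0]
  the inner minimum is attained exactly at the stationary points, and the two
  problems maximise the same objective over the same feasible pairs. *)

Section ConvexFunction.
Context {R : realType} {E : lmodType R}.

Lemma convex_functionD {D : set (convex_lmodType E)} {f g : E -> R} :
  convex_function D f -> convex_function D g ->
  convex_function D (fun x => f x + g x).
Proof.
move=> cf cg t x y xD yD; have := cf t x y xD yD; have := cg t x y xD yD.
set z := conv t x y; rewrite !convRE; lra.
Qed.

Lemma convex_functionZ {D : set (convex_lmodType E)} {a : R} {f : E -> R} :
  0 <= a -> convex_function D f -> convex_function D (fun x => a * f x).
Proof.
move=> a0 cf t x y xD yD; have := ler_wpM2l a0 (cf t x y xD yD).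
set z := conv t x y; rewrite !convRE; lra.
Qed.

Lemma convex_functionT_le (f : E -> R) (u w : E) (h : R) :
  convex_function setT f -> 0 <= h -> h <= 1 ->
  f (h *: u + (1 - h) *: w) <= h * f u + (1 - h) * f w.
Proof.
move=> cf h0 h1.
by have := cf (@interval_inference.Itv01 _ h h0 h1) u w; rewrite !inE => /(_ I I).
Qed.

End ConvexFunction.

Section DirectionalDerivative.
Context {R : realType} {V : normedModType R} {f : V -> R} {x v : V}.
Hypothesis dfv : derivable f x v.

Lemma derive_cvg_at_right :
  (fun h => h^-1 *: (f (h *: v + x) - f x)) @ 0^'+ --> 'D_v f x.
Proof. exact: cvg_dnbhs_at_right. Qed.

Lemma derive_ge0_at_min : (forall y, f x <= f y) -> 0 <= 'D_v f x.
Proof.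
move=> xmin; rewrite -(cvg_lim _ derive_cvg_at_right) //.
apply: limr_ge; first exact: cvgP derive_cvg_at_right.
near=> h; have h0 : 0 < h by near: h; exact: nbhs_right_gt.
by apply: mulr_ge0; [rewrite invr_ge0 ltW|rewrite subr_ge0].
Unshelve. all: by end_near. Qed.

Lemma derive_le_chord :
  (forall h, 0 < h -> h < 1 -> f (h *: v + x) <= h * f (v + x) + (1 - h) * f x) ->
  'D_v f x <= f (v + x) - f x.
Proof.
move=> chord; rewrite -(cvg_lim _ derive_cvg_at_right) //.
apply: limr_le; first exact: cvgP derive_cvg_at_right.
near=> h; have h0 : 0 < h by near: h; exact: nbhs_right_gt.
have h1 : h < 1 by near: h; exact: nbhs_right_lt.
rewrite /GRing.scale /= ler_pdivrMl //; have := chord h h0 h1; lra.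
Unshelve. all: by end_near. Qed.

End DirectionalDerivative.

Section Gradient.
Context {R : realType} {n : nat} {f : 'rV[R]_n -> R} {x : 'rV[R]_n}.
Hypothesis df : differentiable f x.

Lemma derive_grad v : 'D_v f x = \sum_(j < n) v 0 j * grad f x 0 j.
Proof.
rewrite deriveE // [in LHS](matrix_sum_delta v) big_ord1 linear_sum.
by apply: eq_bigr => j _; rewrite linearZ /= -deriveE // mxE.
Qed.

Lemma grad_eq0_at_min : (forall y, f x <= f y) -> grad f x = 0.
Proof.
move=> xmin; apply/rowP => j; rewrite !mxE.
have Dge0 v : 0 <= 'D_v f x := derive_ge0_at_min (diff_derivable df) xmin.
have := Dge0 (- delta_mx 0 j); rewrite deriveE // linearN /= -deriveE //.
by rewrite oppr_ge0 => Dle0; apply/eqP; rewrite eq_le Dle0 Dge0.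
Qed.

Lemma convex_min_iff_grad_eq0 :
  convex_function setT f -> (forall y, f x <= f y) <-> grad f x = 0.
Proof.
move=> cf; split; first exact: grad_eq0_at_min.
move=> g0 y; have := derive_le_chord (diff_derivable df (v := y - x)).
rewrite derive_grad big1 => [|j _]; last by rewrite g0 !mxE mulr0.
rewrite subrK subr_ge0; apply=> h h0 h1.
have -> : h *: (y - x) + x = h *: y + (1 - h) *: x.
  by rewrite scalerBr scalerBl scale1r addrA addrAC.
exact: convex_functionT_le cf (ltW h0) (ltW h1).
Qed.

End Gradient.

Section Objective.
Context {R : realType} {n : nat} (g : 'rV[R]_n -> R) (fd : 'rV[R]_n -> 'rV[R]_n).
Hypotheses (dg : forall x, differentiable g x) (dfd : forall x, differentiable fd x).

Lemma differentiable_objective a x : differentiable (objective g fd a) x.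
Proof.
apply: differentiableB; first exact: differentiableZ.
exact: differentiable_comp.
Qed.

Lemma grad_objective a x :
  grad (objective g fd a) x = a *: grad g x - grad (fun y => g (fd y)) x.
Proof.
apply/rowP => j; rewrite !mxE.
have dgfd : derivable (g \o fd) x (delta_mx 0 j).
  by apply: diff_derivable; exact: differentiable_comp.
have dgx : derivable g x (delta_mx 0 j) by apply: diff_derivable.
have -> : objective g fd a = a \*: g - (g \o fd) by [].
rewrite deriveB; last exact: dgfd.
- by rewrite deriveZ.
- exact: derivableZ.
Qed.

Lemma convex_objective a :
  convex_function setT g -> concave_function (fun x => g (fd x)) -> 0 <= a ->
  convex_function setT (objective g fd a).
Proof. by move=> cg cgfd a0; exact: convex_functionD (convex_functionZ a0 cg) cgfd. Qed.

Lemma minimizer_iff_stationary a x :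
  convex_function setT g -> concave_function (fun x => g (fd x)) -> 0 <= a ->
  is_minimizer g fd a x <-> stationary g fd a x.
Proof.
move=> cg cgfd a0; rewrite /stationary -grad_objective.
have := convex_min_iff_grad_eq0 (differentiable_objective a x)
  (convex_objective a cg cgfd a0).
by rewrite /is_minimizer => ->; split=> [|[]].
Qed.

End Objective.

Theorem theorem7 (R : realType) (n : nat)
  (g : 'rV[R]_n -> R) (fd : 'rV[R]_n -> 'rV[R]_n) :
  convex_function setT g -> C1 g ->
  C1 fd -> concave_function (fun x => g (fd x)) ->
  (* the feasible points correspond: for a >= 0, x attains the inner min
     iff (a, x) is feasible for the nonlinear program *)
  (forall (a : R) (x : 'rV[R]_n), 0 <= a ->
     is_minimizer g fd a x <-> stationary g fd a x) /\
  (* the optimal solutions (hence optimal values) coincide *)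
  (forall (a : R) (x : 'rV[R]_n),
     solves_maxmin g fd a x <-> solves_nlp g fd a x).
Proof.
move=> cg [dg _] [dfd _] cgfd.
have feasible a x : 0 <= a -> is_minimizer g fd a x <-> stationary g fd a x.
  exact: minimizer_iff_stationary.
split=> // a x; split.
- move=> [a0 [xmin amax]]; split=> [|a' x' st']; first exact/feasible.
  by apply: amax; [exact: st'.2 | apply/feasible => //; exact: st'.2].
- move=> [st amax]; have a0 := st.2; do ![split=> //]; first exact/feasible.
  by move=> a' x' a0' x'min; apply/amax/feasible.
Qed.
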